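(* Let $f : M^* \to \mathbb{R}^3$ be a trivalent polyhedral surface with nonvanishing edge lengths, with the three face normals at every vertex linearly independent and adjacent faces satisfying $n_l \neq \pm n_r$. Then $f$ is a discrete minimal surface (i.e. $H_\phi = 0$ for every face $\phi \in F^*$) if and only if $f$ is a critical point of the area functional with respect to all face offsets of finite support, in the following sense: for every smooth family of height functions $h^t$ with $h^0 = h$ such that $\dot h = \frac{d}{dt}h^t|_{t=0}$ has finite support, with face normals $n$ kept fixed and $f^t$ the corresponding polyhedral surfaces, one has \[ \sum_{\phi \in F^*} \frac{d}{dt}\mathrm{Area}(f^t(\phi))\Big|_{t=0} = 0 \] (a sum with only finitely many nonzero terms).
   Context: Let $M=(V,E,F)$ be a cellular decomposition of an oriented surface without boundary (each face having finitely many edges, each vertex of finite degree), and $M^*=(V^*,E^*,F^* )$ its dual decomposition; faces of $M^*$ correspond bijectively to vertices of $M$. A polyhedral surface is a map $f : V^* \to \mathbb{R}^3$ such that the vertices of each face $\phi \in F^*$ are coplanar (faces may self-intersect). It is trivalent if every vertex of $M^*$ has degree 3. For each face $\phi$, $n_\phi \in \mathbb{S}^2$ is its unit normal (compatible with the orientation) and $h_\phi = \langle f_i, n_\phi\rangle$ for any vertex $i$ of $\phi$ is its height; the vertices of a trivalent surface are determined by $(n,h)$, vertex $i$ being the unique point with $\langle f_i,n_\phi\rangle = h_\phi$ for the three faces $\phi$ containing it. For an oriented edge from $i$ to $j$, the left face $l$ is the face whose positively oriented boundary traverses $i \to j$, and the right face $r$ is the other face containing the edge. The edge length is $\ell_{ij}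 = \|f_j - f_i\|$ and the dihedral angle $\alpha_{ij} \in (-\pi,\pi)$ is defined by $\cos\alpha_{ij} = \langle n_l, n_r\rangle$ and $\sin\alpha_{ij} = \langle n_l \times n_r, (f_j - f_i)/\|f_j-f_i\|\rangle$. The integrated mean curvature of a face is $H_\phi = \frac12\sum_{ij\in\partial\phi}\ell_{ij}\tan\frac{\alpha_{ij}}{2}$. The signed area of a face $\phi$ with boundary vertices $i_1,\dots,i_m$ in positive cyclic order is $\mathrm{Area}(f(\phi)) = \frac12\sum_{s=1}^m \langle f_{i_s}\times f_{i_{s+1}}, n_\phi\rangle$ (indices mod $m$). *)

From Stdlib Require Import Reals List.
From Coquelicot Require Import Coquelicot.
Open Scope R_scope.

Record vec3 := V3 { v3x : R; v3y : R; v3z : R }.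

Definition v3dot (a b : vec3) : R := v3x a * v3x b + v3y a * v3y b + v3z a * v3z b.
Definition v3cross (a b : vec3) : vec3 :=
  V3 (v3y a * v3z b - v3z a * v3y b)
     (v3z a * v3x b - v3x a * v3z b)
     (v3x a * v3y b - v3y a * v3x b).
Definition v3add (a b : vec3) : vec3 := V3 (v3x a + v3x b) (v3y a + v3y b) (v3z a + v3z b).
Definition v3sub (a b : vec3) : vec3 := V3 (v3x a - v3x b) (v3y a - v3y b) (v3z a - v3z b).
Definition v3scale (c : R) (a : vec3) : vec3 := V3 (c * v3x a) (c * v3y a) (c * v3z a).
Definition v3opp (a : vec3) : vec3 := V3 (- v3x a) (- v3y a) (- v3z a).
Definition v3zero : vec3 := V3 0 0 0.
Definition v3norm (a : vec3) : R := sqrt (v3dot a a).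

Definition lin_indep3 (a b c : vec3) : Prop :=
  forall x y z : R,
    v3add (v3add (v3scale x a) (v3scale y b)) (v3scale z c) = v3zero ->
    x = 0 /\ y = 0 /\ z = 0.

Definition sumR {A : Type} (F : A -> R) (l : list A) : R :=
  fold_right Rplus 0 (map F l).

(* ---------- oriented combinatorial surface (the dual decomposition M-star) ----------
   Darts = oriented edges of M-star.  [src d] is the initial vertex, [drev d] the
   reversed dart, [face d] the face of M-star whose positively oriented boundary
   traverses d (the left face), [nxt d] the next dart along that boundary. *)
Record OMap := {
  dart : Type; vert : Type; fc : Type;
  src : dart -> vert;
  drev : dart -> dart;
  nxt : dart -> dart;
  face : dart -> fc;
  fdart : fc -> dart;
  fdeg : fc -> nat;
  rev_invol : forall d, drev (drev d) = d;
  rev_nofix : forall d, drev d <> d;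
  nxt_src : forall d, src (nxt d) = src (drev d);
  nxt_face : forall d, face (nxt d) = face d;
  nxt_inj : forall d d', nxt d = nxt d' -> d = d';
  fdart_face : forall p, face (fdart p) = p;
  fdeg_pos : forall p, (0 < fdeg p)%nat;
  fdeg_cycle : forall p, Nat.iter (fdeg p) nxt (fdart p) = fdart p;
  fdeg_min : forall p k, (0 < k < fdeg p)%nat -> Nat.iter k nxt (fdart p) <> fdart p;
  face_orbit : forall d, exists k, (k < fdeg (face d))%nat /\
                          d = Nat.iter k nxt (fdart (face d));
  vert_dart : forall v, exists d, src d = v
}.

Section MapDefs.
Variable M : OMap.

Definition tgt (d : dart M) : vert M := src M (drev M d).
(* rotation of the darts leaving a vertex *)
Definition rot (d : dart M) : dart M := nxt M (drev M d).

Definition trivalent : Prop :=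
  forall d, rot (rot (rot d)) = d /\ rot d <> d /\ rot (rot d) <> d /\
    (forall d', src M d' = src M d -> d' = d \/ d' = rot d \/ d' = rot (rot d)).

Definition bdarts (p : fc M) : list (dart M) :=
  map (fun k => Nat.iter k (nxt M) (fdart M p)) (seq 0 (fdeg M p)).

Definition polyhedral (f : vert M -> vec3) (n : fc M -> vec3) : Prop :=
  (forall p, v3norm (n p) = 1) /\
  (forall d d', face M d = face M d' ->
     v3dot (f (src M d)) (n (face M d)) = v3dot (f (src M d')) (n (face M d))).

Definition height (f : vert M -> vec3) (n : fc M -> vec3) (p : fc M) : R :=
  v3dot (f (src M (fdart M p))) (n p).

Definition edge_length (f : vert M -> vec3) (d : dart M) : R :=
  v3norm (v3sub (f (tgt d)) (f (src M d))).

(* a is the dihedral angle of the oriented edge d: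
   left face = face d, right face = face (drev d) *)
Definition is_dihedral (f : vert M -> vec3) (n : fc M -> vec3) (d : dart M) (a : R) : Prop :=
  - PI < a < PI /\
  cos a = v3dot (n (face M d)) (n (face M (drev M d))) /\
  sin a = v3dot (v3cross (n (face M d)) (n (face M (drev M d))))
                (v3scale (/ edge_length f d) (v3sub (f (tgt d)) (f (src M d)))).

Definition mean_curv (f : vert M -> vec3) (alpha : dart M -> R) (p : fc M) : R :=
  / 2 * sumR (fun d => edge_length f d * tan (alpha d / 2)) (bdarts p).

(* signed area of a face *)
Definition face_area (f : vert M -> vec3) (n : fc M -> vec3) (p : fc M) : R :=
  / 2 * sumR (fun d => v3dot (v3cross (f (src M d)) (f (tgt d))) (n p)) (bdarts p).

End MapDefs.

(* With the normals fixed, a vertex is the common point of the planes of its three faces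
   (Cramer's rule), so a variation of the heights moves every vertex with a velocity [fd]
   satisfying [<fd, n_phi> = hdot_phi] on each incident face.  By the product rule the
   variation of Area(phi) is a sum over the edges of phi; as the edge vector and the
   difference of the endpoint velocities both lie on the line [n_l x n_r], the contribution
   of an edge is
     l (hdot_r - hdot_l cos a) / sin a = hdot_l l tan(a/2) + (l hdot_r - l hdot_l) / sin a.
   The last term changes sign when the edge is reversed, so summing over all faces gives
   sum_phi dArea_phi = 2 sum_phi hdot_phi H_phi.  Hence H = 0 implies criticality, and
   conversely moving only the plane of one face phi yields H_phi = 0. *)

From Stdlib Require Import Reals List Permutation Lra Lia Psatz ClassicalEpsilon FunctionalExtensionality.
From Coquelicot Require Import Coquelicot.
Open Scope R_scope.

Definition det3 (a b c : vec3) : R := v3dot a (v3cross b c).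

Definition cramer (a b c : vec3) (x y z : R) : vec3 :=
  v3scale (/ det3 a b c)
    (v3add (v3add (v3scale x (v3cross b c)) (v3scale y (v3cross c a))) (v3scale z (v3cross a b))).

Ltac vunfold :=
  repeat match goal with v : vec3 |- _ => destruct v end;
  unfold cramer in *; unfold det3 in *;
  unfold v3dot, v3cross, v3add, v3sub, v3scale, v3opp, v3zero in *;
  cbn [v3x v3y v3z] in *.

Lemma v3dot_subl (a b c : vec3) : v3dot (v3sub a b) c = v3dot a c - v3dot b c.
Proof. vunfold; ring. Qed.

Lemma v3dot_self_ge0 (a : vec3) : 0 <= v3dot a a.
Proof. vunfold; nra. Qed.

Lemma v3dot_self_eq0 (a : vec3) : v3dot a a = 0 -> a = v3zero.
Proof.
  destruct a as [x y z]; vunfold; intro H.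
  replace x with 0 by nra; replace y with 0 by nra; replace z with 0 by nra.
  reflexivity.
Qed.

Lemma v3sub_eq0 (a b : vec3) : v3sub a b = v3zero -> a = b.
Proof. vunfold; intro H; injection H; intros; f_equal; lra. Qed.

Lemma unit_dot (a : vec3) : v3norm a = 1 -> v3dot a a = 1.
Proof. unfold v3norm; intro H; rewrite <- (sqrt_sqrt _ (v3dot_self_ge0 a)), H; ring. Qed.

Lemma lagrange_identity (a b : vec3) :
  v3dot (v3cross a b) (v3cross a b) = v3dot a a * v3dot b b - v3dot a b * v3dot a b.
Proof. vunfold; ring. Qed.

Lemma cramer_dot (a b c : vec3) (x y z : R) : det3 a b c <> 0 ->
  v3dot (cramer a b c x y z) a = x /\ v3dot (cramer a b c x y z) b = y /\
  v3dot (cramer a b c x y z) c = z.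
Proof. intro H; vunfold; split; [|split]; field; exact H. Qed.

Lemma cramer_dotK (a b c v : vec3) : det3 a b c <> 0 ->
  cramer a b c (v3dot v a) (v3dot v b) (v3dot v c) = v.
Proof. intro H; vunfold; f_equal; field; exact H. Qed.

Lemma dual_basis_identity (a b c w : vec3) :
  v3add (v3add (v3scale (v3dot w (v3cross b c)) a) (v3scale (v3dot w (v3cross c a)) b))
        (v3scale (v3dot w (v3cross a b)) c) = v3scale (det3 a b c) w.
Proof. vunfold; f_equal; ring. Qed.

(* Applied to [w = b x c], the dual basis identity shows that [det3 a b c = 0] forces
   [b x c = 0]; then [(c.c) b - (b.c) c = 0] is a second vanishing combination. *)
Lemma det3_neq0 (a b c : vec3) : lin_indep3 a b c -> det3 a b c <> 0.
Proof.
  intros Hi Hd.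
  assert (Hbc : v3dot (v3cross b c) (v3cross b c) = 0).
  { refine (proj1 (Hi _ _ _ _)). rewrite dual_basis_identity, Hd. vunfold; f_equal; ring. }
  assert (Hpar : v3add (v3add (v3scale 0 a) (v3scale (v3dot c c) b)) (v3scale (- v3dot b c) c)
                 = v3zero).
  { apply v3dot_self_eq0.
    transitivity (v3dot c c * v3dot (v3cross b c) (v3cross b c)); [vunfold; ring|].
    rewrite Hbc; ring. }
  destruct (Hi _ _ _ Hpar) as [_ [Hc _]].
  apply v3dot_self_eq0 in Hc; subst c.
  assert (H1 : v3add (v3add (v3scale 0 a) (v3scale 0 b)) (v3scale 1 v3zero) = v3zero)
    by (vunfold; f_equal; ring).
  destruct (Hi _ _ _ H1) as [_ [_ H]]; lra.
Qed.

Lemma unit_cross_neq0 (a b : vec3) : v3dot a a = 1 -> v3dot b b = 1 ->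
  a <> b -> a <> v3opp b -> v3dot (v3cross a b) (v3cross a b) <> 0.
Proof.
  intros Ha Hb Nab Nopp E. rewrite lagrange_identity, Ha, Hb in E.
  set (s := v3dot a b) in E.
  assert (Hz : a = v3scale s b).
  { apply v3sub_eq0, v3dot_self_eq0.
    transitivity (v3dot a a - 2 * s * s + s * s * v3dot b b); [unfold s; vunfold; ring|].
    rewrite Ha, Hb; lra. }
  assert (s = 1 \/ s = -1) as [Hs|Hs] by nra; rewrite Hs in Hz; subst a.
  - apply Nab; vunfold; f_equal; ring.
  - apply Nopp; vunfold; f_equal; ring.
Qed.

Lemma orth2_cross_parallel (u p q : vec3) : v3dot u p = 0 -> v3dot u q = 0 ->
  v3scale (v3dot (v3cross p q) (v3cross p q)) u = v3scale (v3dot (v3cross p q) u) (v3cross p q).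
Proof.
  intros Hp Hq.
  assert (E : v3scale (v3dot (v3cross p q) (v3cross p q)) u =
              v3add (v3scale (v3dot (v3cross p q) u) (v3cross p q))
                    (v3cross (v3cross p q) (v3sub (v3scale (v3dot u q) p) (v3scale (v3dot u p) q))))
    by (vunfold; f_equal; ring).
  rewrite E, Hp, Hq. vunfold; f_equal; ring.
Qed.

Lemma dot_cross_orth2 (w e p q : vec3) :
  v3dot w p = 0 -> v3dot w q = 0 -> v3dot e p = 0 -> v3dot e q = 0 ->
  v3dot (v3cross p q) (v3cross p q) <> 0 -> v3dot w (v3cross e p) = 0.
Proof.
  intros Hw1 Hw2 He1 He2 Hc.
  set (C := v3dot (v3cross p q) (v3cross p q)) in *.
  assert (E : C * C * v3dot w (v3cross e p) = v3dot (v3scale C w) (v3cross (v3scale C e) p))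
    by (vunfold; ring).
  unfold C in E at 3 4.
  rewrite (orth2_cross_parallel w p q), (orth2_cross_parallel e p q) in E by assumption.
  assert (Hz : C * C * v3dot w (v3cross e p) = 0) by (rewrite E; vunfold; ring).
  apply Rmult_integral in Hz as [Hz|Hz]; [|exact Hz].
  exfalso; apply Rmult_integral in Hz as [|]; auto.
Qed.

Lemma dot_cross_gram (x e p q : vec3) : v3dot e p = 0 -> v3dot e q = 0 -> v3dot p p = 1 ->
  v3dot (v3cross p q) e * v3dot x (v3cross e p) =
  v3dot e e * (v3dot x q - v3dot x p * v3dot p q).
Proof.
  intros Hp Hq Hpp.
  transitivity (v3dot p p * (v3dot x q * v3dot e e - v3dot e q * v3dot x e)
                - v3dot x p * (v3dot p q * v3dot e e - v3dot e q * v3dot e p)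
                + v3dot e p * (v3dot p q * v3dot x e - v3dot x q * v3dot e p));
    [vunfold; ring|].
  rewrite Hp, Hq, Hpp; ring.
Qed.

Lemma sumR_app {A} (F : A -> R) l1 l2 : sumR F (l1 ++ l2) = sumR F l1 + sumR F l2.
Proof. unfold sumR; induction l1 as [|x l IH]; cbn; [ring|]. rewrite IH; ring. Qed.

Lemma sumR_ext {A} (F G : A -> R) l : (forall x, In x l -> F x = G x) -> sumR F l = sumR G l.
Proof.
  unfold sumR; induction l as [|x l IH]; intro H; cbn; [reflexivity|].
  f_equal; [apply H; now left | apply IH; intros y Hy; apply H; now right].
Qed.

Lemma sumR_minus {A} (F G : A -> R) l : sumR (fun x => F x - G x) l = sumR F l - sumR G l.
Proof. unfold sumR; induction l as [|x l IH]; cbn; [ring|]. rewrite IH; ring. Qed.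

Lemma sumR_plus {A} (F G : A -> R) l : sumR (fun x => F x + G x) l = sumR F l + sumR G l.
Proof. unfold sumR; induction l as [|x l IH]; cbn; [ring|]. rewrite IH; ring. Qed.

Lemma sumR_scal {A} (c : R) (F : A -> R) l : sumR (fun x => c * F x) l = c * sumR F l.
Proof. unfold sumR; induction l as [|x l IH]; cbn; [ring|]. rewrite IH; ring. Qed.

Lemma sumR_map {A B} (F : B -> R) (g : A -> B) l : sumR F (map g l) = sumR (fun x => F (g x)) l.
Proof. unfold sumR; rewrite map_map; reflexivity. Qed.

Lemma sumR_flat_map {A B} (F : B -> R) (g : A -> list B) l :
  sumR F (flat_map g l) = sumR (fun x => sumR F (g x)) l.
Proof.
  induction l as [|x l IH]; [reflexivity|].
  cbn [flat_map]; rewrite sumR_app, IH; reflexivity.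
Qed.

Lemma sumR_perm {A} (F : A -> R) l1 l2 : Permutation l1 l2 -> sumR F l1 = sumR F l2.
Proof. unfold sumR; induction 1; cbn in *; lra. Qed.

Lemma sumR_eq0 {A} (F : A -> R) l : (forall x, In x l -> F x = 0) -> sumR F l = 0.
Proof.
  intro H; rewrite (sumR_ext F (fun _ => 0)) by exact H; clear H.
  unfold sumR; induction l; cbn; [reflexivity|]. rewrite IHl; ring.
Qed.

Lemma sumR_neq0 {A} (F : A -> R) l : sumR F l <> 0 -> exists x, In x l /\ F x <> 0.
Proof.
  intro H; apply NNPP; intro Hn; apply H, sumR_eq0.
  intros x Hx; apply NNPP; intro; apply Hn; eauto.
Qed.

Lemma sumR_filter_neq0 {A} (F : A -> R) l :
  sumR F l = sumR F (filter (fun x => if Req_EM_T (F x) 0 then false else true) l).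
Proof.
  unfold sumR; induction l as [|x l IH]; [reflexivity|]. cbn [filter].
  destruct (Req_EM_T (F x) 0) as [E|E]; cbn; rewrite <- IH; [rewrite E; ring|reflexivity].
Qed.

Lemma sumR_support {A} (F : A -> R) l1 l2 : NoDup l1 -> NoDup l2 ->
  (forall x, F x <> 0 -> In x l1) -> (forall x, F x <> 0 -> In x l2) ->
  sumR F l1 = sumR F l2.
Proof.
  intros N1 N2 H1 H2. rewrite (sumR_filter_neq0 F l1), (sumR_filter_neq0 F l2).
  apply sumR_perm, NoDup_Permutation; try apply NoDup_filter; auto.
  intro x; rewrite !filter_In.
  destruct (Req_EM_T (F x) 0); split; intros [_ Hb]; try discriminate; auto.
Qed.

Lemma sumR_involution {A} (r : A -> A) (g : A -> R) l : (forall x, r (r x) = x) -> NoDup l ->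
  (forall x, g x <> 0 -> In x l /\ In (r x) l) -> sumR (fun x => g (r x)) l = sumR g l.
Proof.
  intros Hr Hl Hg. rewrite <- sumR_map. apply sumR_support; [| exact Hl | | ].
  - apply FinFun.Injective_map_NoDup; [|exact Hl].
    intros x y E; rewrite <- (Hr x), <- (Hr y), E; reflexivity.
  - intros x Hx; apply in_map_iff; exists (r x); rewrite Hr; split; [reflexivity|].
    exact (proj2 (Hg x Hx)).
  - intros x Hx; exact (proj1 (Hg x Hx)).
Qed.

Section Combinatorics.
Variable M : OMap.

Lemma iter_nxt_face k d : face M (Nat.iter k (nxt M) d) = face M d.
Proof. induction k as [|k IH]; cbn; [reflexivity|]. rewrite nxt_face; exact IH. Qed.

Lemma iter_nxt_inj k d d' : Nat.iter k (nxt M) d = Nat.iter k (nxt M) d' -> d = d'.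
Proof. induction k as [|k IH]; cbn; [auto|]. intro H; apply IH, nxt_inj, H. Qed.

Lemma in_bdarts p d : In d (bdarts M p) <-> face M d = p.
Proof.
  unfold bdarts; rewrite in_map_iff; split.
  - intros [k [<- _]]. rewrite iter_nxt_face, fdart_face; reflexivity.
  - intros <-. destruct (face_orbit M d) as [k [Hk E]].
    exists k; split; [exact (eq_sym E)|]. apply in_seq; lia.
Qed.

Lemma NoDup_bdarts p : NoDup (bdarts M p).
Proof.
  unfold bdarts. apply NoDup_map_NoDup_ForallPairs; [|apply seq_NoDup].
  assert (Hlt : forall i j, (i < j < fdeg M p)%nat ->
            Nat.iter i (nxt M) (fdart M p) <> Nat.iter j (nxt M) (fdart M p)).
  { intros i j Hij E.
    replace j with (i + (j - i))%nat in E by lia. rewrite Nat.iter_add in E.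
    apply iter_nxt_inj in E. apply (fdeg_min M p (j - i)); [lia|]. now symmetry. }
  intros i j Hi Hj E. apply in_seq in Hi, Hj.
  destruct (Nat.lt_trichotomy i j) as [H|[H|H]]; [| exact H |]; exfalso.
  - apply (Hlt i j); [lia | exact E].
  - apply (Hlt j i); [lia | exact (eq_sym E)].
Qed.

Lemma tgt_nxt d : tgt M d = src M (nxt M d).
Proof. unfold tgt; rewrite nxt_src; reflexivity. Qed.

Lemma src_rot d : src M (rot M d) = src M d.
Proof. unfold rot; rewrite nxt_src, rev_invol; reflexivity. Qed.

Lemma src_nxt_drev d : src M (nxt M (drev M d)) = src M d.
Proof. rewrite nxt_src, rev_invol; reflexivity. Qed.

Lemma tgt_drev d : tgt M (drev M d) = src M d.
Proof. unfold tgt; rewrite rev_invol; reflexivity. Qed.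

Lemma sumR_bdarts_nxt (F : dart M -> R) p :
  sumR (fun d => F (nxt M d)) (bdarts M p) = sumR F (bdarts M p).
Proof.
  unfold bdarts; rewrite !sumR_map.
  set (G := fun k => F (Nat.iter k (nxt M) (fdart M p))).
  change (sumR (fun k => G (S k)) (seq 0 (fdeg M p)) = sumR G (seq 0 (fdeg M p))).
  assert (Hcyc : G (fdeg M p) = G 0%nat) by (unfold G; cbn; rewrite fdeg_cycle; reflexivity).
  rewrite <- (sumR_map G S), seq_shift.
  destruct (fdeg M p) as [|m]; [reflexivity|].
  rewrite (seq_S m 1), sumR_app.
  change (sumR G (seq 1 m) + (G (S m) + 0) = G 0%nat + sumR G (seq 1 m)).
  rewrite Hcyc; ring.
Qed.

Lemma in_flat_bdarts L d : In d (flat_map (bdarts M) L) <-> In (face M d) L.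
Proof.
  rewrite in_flat_map; split.
  - intros [p [Hp Hd]]. apply in_bdarts in Hd; subst p; exact Hp.
  - intro H; exists (face M d); split; [exact H | now apply in_bdarts].
Qed.

Lemma NoDup_flat_bdarts L : NoDup L -> NoDup (flat_map (bdarts M) L).
Proof.
  induction 1 as [|p L HpL _ IH]; cbn; [constructor|].
  apply NoDup_app; [apply NoDup_bdarts | exact IH |].
  intros d Hd Hd'. apply in_bdarts in Hd; apply in_flat_bdarts in Hd'; subst p; auto.
Qed.

Definition neighbour_closed (k : fc M -> R) (L : list (fc M)) : Prop :=
  forall d, k (face M d) <> 0 -> In (face M d) L /\ In (face M (drev M d)) L.

Lemma neighbour_closed_exists (k : fc M -> R) (S : list (fc M)) :
  (forall p, k p <> 0 -> In p S) -> exists L, NoDup L /\ neighbour_closed k L.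
Proof.
  intro HS. pose (dec := fun p q : fc M => excluded_middle_informative (p = q)).
  exists (nodup dec (S ++ flat_map (fun p => map (fun d => face M (drev M d)) (bdarts M p)) S)).
  split; [apply NoDup_nodup|].
  intros d Hd; apply HS in Hd.
  rewrite !nodup_In, !in_app_iff, !in_flat_map; split; [now left|].
  right; exists (face M d); split; [exact Hd|].
  apply (in_map (fun d => face M (drev M d))), in_bdarts; reflexivity.
Qed.

Lemma neighbour_closed_In (k : fc M -> R) L p : neighbour_closed k L -> k p <> 0 -> In p L.
Proof.
  intros Hcl Hp. rewrite <- (fdart_face M p) in Hp |- *. exact (proj1 (Hcl _ Hp)).
Qed.

End Combinatorics.

Definition area_variation (M : OMap) (f fd : vert M -> vec3) (n : fc M -> vec3) (p : fc M) : R :=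
  / 2 * sumR (fun d => v3dot (v3cross (fd (src M d)) (f (tgt M d))) (n p)
                     + v3dot (v3cross (f (src M d)) (fd (tgt M d))) (n p)) (bdarts M p).

Definition vderiv (a : R -> vec3) (x : R) (a' : vec3) : Prop :=
  is_derive (fun t => v3x (a t)) x (v3x a') /\ is_derive (fun t => v3y (a t)) x (v3y a') /\
  is_derive (fun t => v3z (a t)) x (v3z a').

Lemma is_derive_eq (f : R -> R) x l l' : is_derive f x l -> l = l' -> is_derive f x l'.
Proof. now intros H <-. Qed.

Lemma is_derive_Rplus (f g : R -> R) x a b :
  is_derive f x a -> is_derive g x b -> is_derive (fun t => f t + g t) x (a + b).
Proof. intros; apply (is_derive_plus f g); auto. Qed.

Lemma is_derive_Rminus (f g : R -> R) x a b :
  is_derive f x a -> is_derive g x b -> is_derive (fun t => f t - g t) x (a - b).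
Proof. intros; apply (is_derive_minus f g); auto. Qed.

Lemma is_derive_Rmult (f g : R -> R) x a b :
  is_derive f x a -> is_derive g x b -> is_derive (fun t => f t * g t) x (a * g x + f x * b).
Proof. intros; apply (is_derive_mult f g); auto. intros; apply Rmult_comm. Qed.

Lemma is_derive_Rconst (c x : R) : is_derive (fun _ => c) x 0.
Proof. apply (is_derive_const c). Qed.

Ltac derive_poly :=
  match goal with
  | |- is_derive (fun t => _ + _) _ _ => apply is_derive_Rplus; derive_poly
  | |- is_derive (fun t => _ - _) _ _ => apply is_derive_Rminus; derive_poly
  | |- is_derive (fun t => _ * _) _ _ => apply is_derive_Rmult; derive_poly
  | _ => first [eassumption | apply is_derive_Rconst]
  end.

(* The derivative computed by [derive_poly] lives in a Coquelicot structure over [R];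
   [change] exposes it as a plain real equation for [ring]. *)
Ltac derive_ring :=
  eapply is_derive_eq;
  [ derive_poly
  | cbv beta; match goal with |- ?a = ?b => change (@eq R a b) end; ring ].

Lemma vderiv_cramer (a b c : vec3) (h1 h2 h3 : R -> R) x d1 d2 d3 :
  is_derive h1 x d1 -> is_derive h2 x d2 -> is_derive h3 x d3 ->
  vderiv (fun t => cramer a b c (h1 t) (h2 t) (h3 t)) x (cramer a b c d1 d2 d3).
Proof.
  intros H1 H2 H3. unfold vderiv, cramer, v3scale, v3add; cbn [v3x v3y v3z].
  split; [|split]; derive_ring.
Qed.

Lemma vderiv_dot (a : R -> vec3) x a' (m : vec3) :
  vderiv a x a' -> is_derive (fun t => v3dot (a t) m) x (v3dot a' m).
Proof. intros [ax [ay az]]; unfold v3dot; derive_ring. Qed.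

Lemma vderiv_cross_dot (a b : R -> vec3) x a' b' (m : vec3) : vderiv a x a' -> vderiv b x b' ->
  is_derive (fun t => v3dot (v3cross (a t) (b t)) m) x
    (v3dot (v3cross a' (b x)) m + v3dot (v3cross (a x) b') m).
Proof.
  intros [ax [ay az]] [bx [by' bz]]; unfold v3dot, v3cross; cbn [v3x v3y v3z]; derive_ring.
Qed.

Section VertexPlanes.
Variables (M : OMap) (n : fc M -> vec3).
Hypothesis Hdet : forall d,
  det3 (n (face M d)) (n (face M (rot M d))) (n (face M (rot M (rot M d)))) <> 0.

Definition plane_point (k : fc M -> R) (d : dart M) : vec3 :=
  cramer (n (face M d)) (n (face M (rot M d))) (n (face M (rot M (rot M d))))
         (k (face M d)) (k (face M (rot M d))) (k (face M (rot M (rot M d)))).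

Lemma plane_pointE (g : vert M -> vec3) (k : fc M -> R) :
  (forall d, v3dot (g (src M d)) (n (face M d)) = k (face M d)) ->
  forall d, g (src M d) = plane_point k d.
Proof.
  intros Hg d. unfold plane_point.
  rewrite <- (Hg d), <- (Hg (rot M d)), <- (Hg (rot M (rot M d))), !src_rot.
  symmetry; apply cramer_dotK, Hdet.
Qed.

Lemma normal_velocity_exists (k : fc M -> R) : trivalent M ->
  exists w : vert M -> vec3, forall d, v3dot (w (src M d)) (n (face M d)) = k (face M d).
Proof.
  intro Htri.
  destruct (choice (fun v d => src M d = v) (vert_dart M)) as [dv Hdv].
  exists (fun v => plane_point k (dv v)). intro d.
  assert (Hs : src M d = src M (dv (src M d))) by (symmetry; apply Hdv).
  revert Hs; generalize (dv (src M d)); intros e Hs.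
  destruct (cramer_dot (n (face M e)) (n (face M (rot M e))) (n (face M (rot M (rot M e))))
              (k (face M e)) (k (face M (rot M e))) (k (face M (rot M (rot M e)))) (Hdet e))
    as [H1 [H2 H3]].
  destruct (proj2 (proj2 (proj2 (Htri e))) d Hs) as [E|[E|E]]; subst d; assumption.
Qed.

Lemma plane_equations_unique (g1 g2 : vert M -> vec3) (k : fc M -> R) :
  (forall d, v3dot (g1 (src M d)) (n (face M d)) = k (face M d)) ->
  (forall d, v3dot (g2 (src M d)) (n (face M d)) = k (face M d)) -> g1 = g2.
Proof.
  intros H1 H2. apply functional_extensionality; intro v.
  destruct (vert_dart M v) as [d <-]. now rewrite (plane_pointE g1 k H1), (plane_pointE g2 k H2).
Qed.

Section HeightFamily.
Variables (ht : R -> fc M -> R) (ft : R -> vert M -> vec3).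
Hypothesis Hft : forall t d, v3dot (ft t (src M d)) (n (face M d)) = ht t (face M d).
Hypothesis Hht : forall p, ex_derive (fun s => ht s p) 0.

Definition velocity (v : vert M) : vec3 :=
  V3 (Derive (fun t => v3x (ft t v)) 0) (Derive (fun t => v3y (ft t v)) 0)
     (Derive (fun t => v3z (ft t v)) 0).

Lemma velocity_correct v : vderiv (fun t => ft t v) 0 (velocity v).
Proof.
  destruct (vert_dart M v) as [d <-].
  assert (E : forall t, plane_point (ht t) d = ft t (src M d))
    by (intro t; symmetry; apply plane_pointE, Hft).
  assert (Hd : vderiv (fun t => plane_point (ht t) d) 0
                 (plane_point (fun p => Derive (fun s => ht s p) 0) d))
    by (apply vderiv_cramer; apply Derive_correct, Hht).
  destruct Hd as [X [Y Z]].
  split; [|split]; apply Derive_correct; eexists;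
    (eapply is_derive_ext; [intro t; rewrite <- E; reflexivity | eassumption]).
Qed.

Lemma velocity_dot d :
  v3dot (velocity (src M d)) (n (face M d)) = Derive (fun s => ht s (face M d)) 0.
Proof.
  rewrite <- (is_derive_unique _ _ _ (vderiv_dot _ _ _ (n (face M d)) (velocity_correct (src M d)))).
  apply Derive_ext; intro t; apply Hft.
Qed.

Lemma is_derive_face_area p :
  is_derive (fun t => face_area M (ft t) n p) 0 (area_variation M (ft 0) velocity n p).
Proof.
  unfold face_area, area_variation. apply (is_derive_scal _ 0 (/ 2)).
  induction (bdarts M p) as [|d l IH]; unfold sumR in *; cbn.
  - apply is_derive_Rconst.
  - apply is_derive_Rplus; [|exact IH].
    apply vderiv_cross_dot; apply velocity_correct.
Qed.

End HeightFamily.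
End VertexPlanes.

Lemma tan_half_angle (a : R) : - PI < a < PI -> sin a <> 0 -> tan (a / 2) = (1 - cos a) / sin a.
Proof.
  intros Ha Hs.
  assert (Hc : 0 < cos (a / 2)) by (apply cos_gt_0; lra).
  set (b := a / 2) in *.
  replace a with (2 * b) in Hs |- * by (unfold b; field).
  rewrite sin_2a, cos_2a_sin in *. unfold tan. field.
  split; [lra|]. intro E; apply Hs; rewrite E; ring.
Qed.

Section Geometry.
Variables (M : OMap) (f : vert M -> vec3) (n : fc M -> vec3) (alpha : dart M -> R).
Hypothesis Hpoly : polyhedral M f n.
Hypothesis Hlen : forall d, f (tgt M d) <> f (src M d).
Hypothesis Hadj : forall d, n (face M d) <> n (face M (drev M d)) /\
                            n (face M d) <> v3opp (n (face M (drev M d))).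
Hypothesis Halpha : forall d, is_dihedral M f n d (alpha d).

Lemma edge_normal_orth (g : vert M -> vec3) (k : fc M -> R) :
  (forall d, v3dot (g (src M d)) (n (face M d)) = k (face M d)) ->
  forall d, v3dot (v3sub (g (tgt M d)) (g (src M d))) (n (face M d)) = 0 /\
            v3dot (v3sub (g (tgt M d)) (g (src M d))) (n (face M (drev M d))) = 0.
Proof.
  intros Hg d. rewrite !v3dot_subl. split.
  - rewrite tgt_nxt, Hg, <- (nxt_face M d), Hg; ring.
  - unfold tgt; rewrite Hg, <- (src_nxt_drev M d), <- (nxt_face M (drev M d)), Hg; ring.
Qed.

Lemma unit_normal p : v3dot (n p) (n p) = 1.
Proof. apply unit_dot, (proj1 Hpoly). Qed.

Lemma height_eq d : v3dot (f (src M d)) (n (face M d)) = height M f n (face M d).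
Proof.
  exact (proj2 Hpoly d (fdart M (face M d)) (eq_sym (fdart_face M _))).
Qed.

Definition edge (d : dart M) : vec3 := v3sub (f (tgt M d)) (f (src M d)).

Lemma edge_length_pos d : 0 < edge_length M f d.
Proof.
  unfold edge_length, v3norm. apply sqrt_lt_R0.
  destruct (Rle_lt_or_eq_dec _ _ (v3dot_self_ge0 (v3sub (f (tgt M d)) (f (src M d))))) as [|E];
    [assumption|].
  exfalso; apply (Hlen d), v3sub_eq0, v3dot_self_eq0; now symmetry.
Qed.

Lemma edge_dot_self d : v3dot (edge d) (edge d) = edge_length M f d * edge_length M f d.
Proof. unfold edge_length, v3norm; rewrite sqrt_sqrt; [reflexivity | apply v3dot_self_ge0]. Qed.

Lemma normals_cross_neq0 d :
  v3dot (v3cross (n (face M d)) (n (face M (drev M d))))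
        (v3cross (n (face M d)) (n (face M (drev M d)))) <> 0.
Proof. apply unit_cross_neq0; try apply unit_normal; apply Hadj. Qed.

Lemma sin_dihedral_neq0 d : sin (alpha d) <> 0.
Proof.
  intro E. destruct (Halpha d) as [_ [Hc _]].
  apply (normals_cross_neq0 d). rewrite lagrange_identity, !unit_normal, <- Hc.
  pose proof (sin2_cos2 (alpha d)) as H; rewrite E in H; unfold Rsqr in H; lra.
Qed.

Lemma edge_length_sin d :
  edge_length M f d * sin (alpha d) =
  v3dot (v3cross (n (face M d)) (n (face M (drev M d)))) (edge d).
Proof.
  destruct (Halpha d) as [_ [_ ->]]. pose proof (edge_length_pos d).
  unfold edge; generalize (v3cross (n (face M d)) (n (face M (drev M d)))).
  intro c; vunfold; field; lra.
Qed.

Lemma edge_length_drev d : edge_length M f (drev M d) = edge_length M f d.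
Proof.
  unfold edge_length, v3norm; rewrite tgt_drev; unfold tgt.
  f_equal; generalize (f (src M d)) (f (src M (drev M d))); intros; vunfold; ring.
Qed.

Lemma sin_dihedral_drev d : sin (alpha (drev M d)) = sin (alpha d).
Proof.
  destruct (Halpha d) as [_ [_ ->]]; destruct (Halpha (drev M d)) as [_ [_ ->]].
  rewrite edge_length_drev, rev_invol, tgt_drev; unfold tgt.
  generalize (/ edge_length M f d); intro r.
  generalize (n (face M d)) (n (face M (drev M d))) (f (src M d)) (f (src M (drev M d))).
  intros; vunfold; ring.
Qed.

Section FirstVariation.
Variables (fd : vert M -> vec3) (hd : fc M -> R).
Hypothesis Hfd : forall d, v3dot (fd (src M d)) (n (face M d)) = hd (face M d).

Definition edge_flux (d : dart M) : R := v3dot (fd (src M d)) (v3cross (edge d) (n (face M d))).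

Lemma area_variation_flux p : area_variation M f fd n p = sumR edge_flux (bdarts M p).
Proof.
  set (F := fun d => v3dot (v3cross (fd (src M d)) (f (src M d))) (n p)).
  unfold area_variation.
  rewrite (sumR_ext _ (fun d => 2 * edge_flux d - (F (nxt M d) - F d))).
  { rewrite sumR_minus, sumR_scal, sumR_minus, sumR_bdarts_nxt; field. }
  intros d Hd; apply in_bdarts in Hd; subst p.
  destruct (edge_normal_orth f _ height_eq d) as [E1 E2].
  destruct (edge_normal_orth fd hd Hfd d) as [W1 W2].
  pose proof (dot_cross_orth2 _ _ _ _ W1 W2 E1 E2 (normals_cross_neq0 d)) as P.
  rewrite v3dot_subl in P.
  assert (Hprod : forall a b x y m : vec3,
    v3dot (v3cross a y) m + v3dot (v3cross x b) m =
    v3dot a (v3cross (v3sub y x) m) + v3dot b (v3cross (v3sub y x) m)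
    - (v3dot (v3cross b y) m - v3dot (v3cross a x) m)) by (intros; vunfold; ring).
  unfold F, edge_flux, edge; rewrite <- !tgt_nxt, Hprod; lra.
Qed.

Lemma edge_fluxE d : edge_flux d =
  edge_length M f d * (hd (face M (drev M d)) - hd (face M d) * cos (alpha d)) / sin (alpha d).
Proof.
  destruct (edge_normal_orth f _ height_eq d) as [E1 E2].
  pose proof (dot_cross_gram (fd (src M d)) (edge d) _ _ E1 E2 (unit_normal _)) as G.
  assert (Hr : v3dot (fd (src M d)) (n (face M (drev M d))) = hd (face M (drev M d)))
    by (rewrite <- (src_nxt_drev M d), <- (nxt_face M (drev M d)); apply Hfd).
  destruct (Halpha d) as [_ [Hc _]].
  rewrite <- edge_length_sin, edge_dot_self, Hfd, Hr, <- Hc in G.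
  pose proof (edge_length_pos d); pose proof (sin_dihedral_neq0 d).
  apply (Rmult_eq_reg_l (edge_length M f d * sin (alpha d)));
    [| apply Rmult_integral_contrapositive; split; lra].
  unfold edge_flux; rewrite G; field; assumption.
Qed.

Definition edge_weight (d : dart M) : R := edge_length M f d * hd (face M d) / sin (alpha d).

Lemma edge_flux_split d : edge_flux d =
  hd (face M d) * (edge_length M f d * tan (alpha d / 2)) + (edge_weight (drev M d) - edge_weight d).
Proof.
  rewrite edge_fluxE, tan_half_angle by (apply Halpha || apply sin_dihedral_neq0).
  unfold edge_weight; rewrite edge_length_drev, sin_dihedral_drev.
  field; apply sin_dihedral_neq0.
Qed.

Lemma area_variation_support L : neighbour_closed M hd L ->
  forall p, area_variation M f fd n p <> 0 -> In p L.
Proof.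
  intros Hcl p Hp. rewrite area_variation_flux in Hp.
  destruct (sumR_neq0 _ _ Hp) as [d [Hd Hflux]]. apply in_bdarts in Hd; subst p.
  destruct (Req_dec (hd (face M d)) 0) as [E|E]; [|exact (proj1 (Hcl d E))].
  assert (E' : hd (face M (drev M d)) <> 0).
  { intro E'; apply Hflux; rewrite edge_fluxE, E, E'; field; apply sin_dihedral_neq0. }
  destruct (Hcl _ E') as [_ H]; rewrite rev_invol in H; exact H.
Qed.

Lemma sum_area_variation L : NoDup L -> neighbour_closed M hd L ->
  sumR (area_variation M f fd n) L = sumR (fun p => hd p * (2 * mean_curv M f alpha p)) L.
Proof.
  intros HL Hcl.
  set (D := flat_map (bdarts M) L).
  set (T := fun d => hd (face M d) * (edge_length M f d * tan (alpha d / 2))).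
  assert (Hw : forall d, edge_weight d <> 0 -> In d D /\ In (drev M d) D).
  { intros d Hd. unfold D; rewrite !in_flat_bdarts. apply Hcl.
    intro E; apply Hd; unfold edge_weight; rewrite E; field; apply sin_dihedral_neq0. }
  transitivity (sumR T D).
  - rewrite (sumR_ext _ (fun p => sumR edge_flux (bdarts M p))) by (intros; apply area_variation_flux).
    unfold D; rewrite <- sumR_flat_map, (sumR_ext _ (fun d => T d + (edge_weight (drev M d) - edge_weight d)))
      by (intros; apply edge_flux_split).
    rewrite sumR_plus, sumR_minus, (sumR_involution (drev M)); [ring | apply rev_invol | | exact Hw].
    now apply NoDup_flat_bdarts.
  - unfold D; rewrite sumR_flat_map. apply sumR_ext; intros p _. unfold mean_curv, T.
    rewrite (sumR_ext _ (fun d => hd p * (edge_length M f d * tan (alpha d / 2))))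
      by (intros d Hd; apply in_bdarts in Hd; now rewrite Hd).
    rewrite sumR_scal; field.
Qed.

End FirstVariation.

End Geometry.

Lemma is_derive_affine (a b x : R) : is_derive (fun s => a + s * b) x b.
Proof. auto_derive; [exact I | ring]. Qed.

Lemma ex_derive_n_affine (a b : R) k x : ex_derive_n (fun s => a + s * b) k x.
Proof.
  apply ex_derive_n_plus.
  - apply filter_forall; intros; apply ex_derive_n_const.
  - apply filter_forall; intros. apply ex_derive_n_scal_r.
    apply (ex_derive_n_ext (fun s => s ^ 1)); [intro; ring|]. apply ex_derive_n_pow.
Qed.

Section Criticality.
Variables (M : OMap) (f : vert M -> vec3) (n : fc M -> vec3) (alpha : dart M -> R).
Hypothesis Htri : trivalent M.
Hypothesis Hpoly : polyhedral M f n.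
Hypothesis Hlen : forall d, f (tgt M d) <> f (src M d).
Hypothesis Hindep : forall d, lin_indep3 (n (face M d)) (n (face M (rot M d)))
                                         (n (face M (rot M (rot M d)))).
Hypothesis Hadj : forall d, n (face M d) <> n (face M (drev M d)) /\
                            n (face M d) <> v3opp (n (face M (drev M d))).
Hypothesis Halpha : forall d, is_dihedral M f n d (alpha d).

Lemma vertex_normals_det_neq0 d :
  det3 (n (face M d)) (n (face M (rot M d))) (n (face M (rot M (rot M d)))) <> 0.
Proof. exact (det3_neq0 _ _ _ (Hindep d)). Qed.

Lemma first_variation (ht : R -> fc M -> R) (ft : R -> vert M -> vec3) (hd : fc M -> R)
    (L : list (fc M)) :
  (forall p, ht 0 p = height M f n p) ->
  (forall p, is_derive (fun s => ht s p) 0 (hd p)) ->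
  (forall t d, v3dot (ft t (src M d)) (n (face M d)) = ht t (face M d)) ->
  NoDup L -> neighbour_closed M hd L ->
  (forall p, Derive (fun t => face_area M (ft t) n p) 0 <> 0 -> In p L) /\
  sumR (fun p => Derive (fun t => face_area M (ft t) n p) 0) L =
  sumR (fun p => hd p * (2 * mean_curv M f alpha p)) L.
Proof.
  intros Hinit Hhd Hft HL Hcl.
  assert (Hex : forall p, ex_derive (fun s => ht s p) 0) by (intro p; eexists; apply Hhd).
  assert (Hf0 : ft 0 = f).
  { apply (plane_equations_unique M n vertex_normals_det_neq0 _ _ (height M f n)).
    - intro d; rewrite Hft; apply Hinit.
    - exact (height_eq M f n Hpoly). }
  assert (Hv : forall d, v3dot (velocity M ft (src M d)) (n (face M d)) = hd (face M d)).
  { intro d; rewrite (velocity_dot M n vertex_normals_det_neq0 ht ft Hft Hex).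
    apply is_derive_unique, Hhd. }
  assert (HdA : forall p, Derive (fun t => face_area M (ft t) n p) 0 =
                          area_variation M f (velocity M ft) n p).
  { intro p; rewrite <- Hf0.
    exact (is_derive_unique _ _ _ (is_derive_face_area M n vertex_normals_det_neq0 ht ft Hft Hex p)). }
  split.
  - intros p Hp; rewrite HdA in Hp.
    exact (area_variation_support M f n alpha Hpoly Hlen Hadj Halpha _ _ Hv L Hcl p Hp).
  - rewrite (sumR_ext _ _ L (fun p _ => HdA p)).
    exact (sum_area_variation M f n alpha Hpoly Hlen Hadj Halpha _ _ Hv L HL Hcl).
Qed.

Definition area_critical : Prop :=
  forall (ht : R -> fc M -> R) (ft : R -> vert M -> vec3),
    (forall p, ht 0 p = height M f n p) ->
    (forall p k t, ex_derive_n (fun s => ht s p) k t) ->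
    (exists L : list (fc M), forall p, Derive (fun s => ht s p) 0 <> 0 -> In p L) ->
    (forall t d, v3dot (ft t (src M d)) (n (face M d)) = ht t (face M d)) ->
    exists L : list (fc M),
      NoDup L /\
      (forall p, Derive (fun t => face_area M (ft t) n p) 0 <> 0 -> In p L) /\
      sumR (fun p => Derive (fun t => face_area M (ft t) n p) 0) L = 0.

Lemma minimal_area_critical : (forall p, mean_curv M f alpha p = 0) -> area_critical.
Proof.
  intros Hmin ht ft Hinit Hsmooth [S HS] Hft.
  assert (Hhd : forall p, is_derive (fun s => ht s p) 0 (Derive (fun s => ht s p) 0))
    by (intro p; apply Derive_correct, (Hsmooth p 1%nat 0)).
  destruct (neighbour_closed_exists M _ S HS) as [L [HL Hcl]].
  destruct (first_variation ht ft _ L Hinit Hhd Hft HL Hcl) as [Hcov Hsum].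
  exists L; split; [exact HL | split; [exact Hcov |]].
  rewrite Hsum; apply sumR_eq0; intros p _; rewrite Hmin; ring.
Qed.

Lemma area_critical_minimal : area_critical -> forall p0, mean_curv M f alpha p0 = 0.
Proof.
  intros Hcrit p0.
  pose (k := fun q : fc M => if excluded_middle_informative (q = p0) then 1 else 0).
  assert (Hk0 : k p0 = 1) by (unfold k; destruct excluded_middle_informative; tauto).
  assert (Hk : forall q, k q <> 0 -> In q (p0 :: nil)).
  { intro q; unfold k; destruct excluded_middle_informative as [->|]; [left; reflexivity | tauto]. }
  destruct (normal_velocity_exists M n vertex_normals_det_neq0 k Htri) as [w Hw].
  pose (ht := fun t q => height M f n q + t * k q).
  pose (ft := fun t v => v3add (f v) (v3scale t (w v))).
  assert (Hinit : forall q, ht 0 q = height M f n q) by (intro q; unfold ht; ring).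
  assert (Hhd : forall q, is_derive (fun s => ht s q) 0 (k q)) by (intro; apply is_derive_affine).
  assert (Hft : forall t d, v3dot (ft t (src M d)) (n (face M d)) = ht t (face M d)).
  { intros t d. unfold ft, ht; rewrite <- height_eq, <- Hw by exact Hpoly.
    generalize (f (src M d)) (w (src M d)) (n (face M d)); intros; vunfold; ring. }
  destruct (Hcrit ht ft) as [L' [HL' [Hcov' Hsum']]].
  - exact Hinit.
  - intros q m t; apply ex_derive_n_affine.
  - exists (p0 :: nil); intros q Hq; apply Hk.
    rewrite <- (is_derive_unique _ _ _ (Hhd q)); exact Hq.
  - exact Hft.
  - destruct (neighbour_closed_exists M k _ Hk) as [L [HL Hcl]].
    destruct (first_variation ht ft k L Hinit Hhd Hft HL Hcl) as [Hcov Hsum].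
    rewrite (sumR_support _ L' L HL' HL Hcov' Hcov), Hsum in Hsum'.
    rewrite (sumR_support _ L (p0 :: nil) HL (NoDup_cons _ (@in_nil _ p0) (NoDup_nil _))) in Hsum'.
    + cbn in Hsum'; rewrite Hk0 in Hsum'; lra.
    + intros q Hq; apply (neighbour_closed_In M k L q Hcl); intro E; apply Hq; rewrite E; ring.
    + intros q Hq; apply Hk; intro E; apply Hq; rewrite E; ring.
Qed.

End Criticality.

Theorem mainTheorem3 (M : OMap) (f : vert M -> vec3) (n : fc M -> vec3)
    (alpha : dart M -> R)
    (Htri : trivalent M)
    (Hpoly : polyhedral M f n)
    (Hlen : forall d, f (tgt M d) <> f (src M d))
    (Hindep : forall d, lin_indep3 (n (face M d)) (n (face M (rot M d)))
                                   (n (face M (rot M (rot M d)))))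
    (Hadj : forall d, n (face M d) <> n (face M (drev M d)) /\
                      n (face M d) <> v3opp (n (face M (drev M d))))
    (Halpha : forall d, is_dihedral M f n d (alpha d)) :
  (forall p, mean_curv M f alpha p = 0) <->
  (forall (ht : R -> fc M -> R) (ft : R -> vert M -> vec3),
     (forall p, ht 0 p = height M f n p) ->
     (forall p k t, ex_derive_n (fun s => ht s p) k t) ->
     (exists L : list (fc M), forall p, Derive (fun s => ht s p) 0 <> 0 -> In p L) ->
     (forall t d, v3dot (ft t (src M d)) (n (face M d)) = ht t (face M d)) ->
     exists L : list (fc M),
       NoDup L /\
       (forall p, Derive (fun t => face_area M (ft t) n p) 0 <> 0 -> In p L) /\
       sumR (fun p => Derive (fun t => face_area M (ft t) n p) 0) L = 0).
Proof.
  split.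
  - exact (minimal_area_critical M f n alpha Hpoly Hlen Hindep Hadj Halpha).
  - exact (area_critical_minimal M f n alpha Htri Hpoly Hlen Hindep Hadj Halpha).
Qed.
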